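(* Let $f:\mathbb{R}^n\times\mathbb{R}^p\to[-\infty,\infty]$ be a proper nearly convex function and $F:\mathbb{R}^n\rightrightarrows\mathbb{R}^p$ a nearly convex set-valued mapping with $\operatorname{ri}(\operatorname{dom} f)\cap\operatorname{ri}(\operatorname{gph} F)\neq\emptyset$, and let $\mu(x)=\inf\{f(x,y):y\in F(x)\}$. Then for all $w\in\mathbb{R}^n$, $$\mu^*(w)=(f^*\square F^* )(w,0)=\inf\{f^*(w_1,v_1)+F^*(w_2,v_2): w_1+w_2=w,\ v_1+v_2=0\}.$$ Moreover, if $\mu^*(w)\in\mathbb{R}$, there exist $w_1,w_2\in\mathbb{R}^n$ with $w_1+w_2=w$ and $v\in\mathbb{R}^p$ such that $\mu^*(w)=f^*(w_1,v)+F^*(w_2,-v)$.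
   Context: A set $\Omega$ is nearly convex if there is a convex set $C$ with $C\subset\Omega\subset\overline{C}$; $\operatorname{ri}\Omega=\{a\in\Omega:\exists\delta>0,\ B(a;\delta)\cap\operatorname{aff}\Omega\subset\Omega\}$. A function is nearly convex if its epigraph is nearly convex, proper if its domain $\{f<\infty\}$ is nonempty and $f>-\infty$; a set-valued mapping is nearly convex if its graph $\operatorname{gph}F=\{(x,y):y\in F(x)\}$ is. Fenchel conjugate: $f^*(z)=\sup_x\{\langle z,x\rangle-f(x)\}$. Fenchel conjugate of a set-valued mapping: $F^*(u,v)=\sigma_{\operatorname{gph}F}(u,v)=\sup\{\langle u,x\rangle+\langle v,y\rangle:(x,y)\in\operatorname{gph}F\}$. Infimal convolution: $(g\square h)(z)=\inf\{g(z_1)+h(z_2):z_1+z_2=z\}$. *)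

From HB Require Import structures.
From mathcomp Require Import all_boot all_order all_algebra.
From mathcomp Require Import boolp classical_sets reals constructive_ereal ereal.
Set Implicit Arguments. Unset Strict Implicit. Unset Printing Implicit Defensive.
Import Order.TTheory GRing.Theory Num.Theory.
Local Open Scope classical_set_scope.
Local Open Scope ring_scope.

Section Defs.
Variable R : realType.

Definition dotv (m : nat) (u v : 'rV[R]_m) : R := \sum_(i < m) u 0 i * v 0 i.

Definition dist2 (m : nat) (x y : 'rV[R]_m) : R := \sum_(i < m) (x 0 i - y 0 i) ^+ 2.

Definition eball (m : nat) (a : 'rV[R]_m) (d : R) : set 'rV[R]_m :=
  [set x | dist2 x a < d ^+ 2].

Definition eclosure (m : nat) (C : set 'rV[R]_m) : set 'rV[R]_m :=
  [set x | forall e : R, 0 < e -> exists c, C c /\ dist2 x c < e ^+ 2].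

Definition cvx_set (m : nat) (C : set 'rV[R]_m) : Prop :=
  forall x y t, C x -> C y -> 0 <= t -> t <= 1 -> C ((1 - t) *: x + t *: y).

Definition affhull (m : nat) (O : set 'rV[R]_m) : set 'rV[R]_m :=
  [set x | exists (k : nat) (pts : 'I_k -> 'rV[R]_m) (c : 'I_k -> R),
     (forall i, O (pts i)) /\ \sum_(i < k) c i = 1 /\ x = \sum_(i < k) c i *: pts i].

Definition relint (m : nat) (O : set 'rV[R]_m) : set 'rV[R]_m :=
  [set a | O a /\ exists d : R, 0 < d /\ (eball a d `&` affhull O) `<=` O].

Definition nearly_convex (m : nat) (O : set 'rV[R]_m) : Prop :=
  exists C, cvx_set C /\ C `<=` O /\ O `<=` eclosure C.

(* functions on R^n x R^p, with the pair (x,y) identified with row_mx x y *)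
Definition epi (n p : nat) (f : 'rV[R]_n -> 'rV[R]_p -> \bar R) : set 'rV[R]_(n + p + 1) :=
  [set z | exists x y (a : R), z = row_mx (row_mx x y) (\row_(j < 1) a) /\ (f x y <= a%:E)%E].

Definition domf (n p : nat) (f : 'rV[R]_n -> 'rV[R]_p -> \bar R) : set 'rV[R]_(n + p) :=
  [set z | exists x y, z = row_mx x y /\ (f x y < +oo)%E].

Definition proper_fun (n p : nat) (f : 'rV[R]_n -> 'rV[R]_p -> \bar R) : Prop :=
  (exists x y, (f x y < +oo)%E) /\ (forall x y, (-oo < f x y)%E).

Definition nearly_convex_fun (n p : nat) (f : 'rV[R]_n -> 'rV[R]_p -> \bar R) : Prop :=
  nearly_convex (epi f).

Definition gph (n p : nat) (F : 'rV[R]_n -> set 'rV[R]_p) : set 'rV[R]_(n + p) :=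
  [set z | exists x y, z = row_mx x y /\ F x y].

Definition nearly_convex_map (n p : nat) (F : 'rV[R]_n -> set 'rV[R]_p) : Prop :=
  nearly_convex (gph F).

Definition fconj2 (n p : nat) (f : 'rV[R]_n -> 'rV[R]_p -> \bar R)
  (u : 'rV[R]_n) (v : 'rV[R]_p) : \bar R :=
  ereal_sup [set t | exists x y, t = ((dotv u x + dotv v y)%:E - f x y)%E].

Definition fconj (n : nat) (g : 'rV[R]_n -> \bar R) (w : 'rV[R]_n) : \bar R :=
  ereal_sup [set t | exists x, t = ((dotv w x)%:E - g x)%E].

Definition mapconj (n p : nat) (F : 'rV[R]_n -> set 'rV[R]_p)
  (u : 'rV[R]_n) (v : 'rV[R]_p) : \bar R :=
  ereal_sup [set t | exists x y, F x y /\ t = (dotv u x + dotv v y)%:E].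

Definition infconv (n p : nat) (g h : 'rV[R]_n -> 'rV[R]_p -> \bar R)
  (w : 'rV[R]_n) (v : 'rV[R]_p) : \bar R :=
  ereal_inf [set t | exists w1 w2 v1 v2,
     w1 + w2 = w /\ v1 + v2 = v /\ t = (g w1 v1 + h w2 v2)%E].

Definition optval (n p : nat) (f : 'rV[R]_n -> 'rV[R]_p -> \bar R)
  (F : 'rV[R]_n -> set 'rV[R]_p) (x : 'rV[R]_n) : \bar R :=
  ereal_inf [set t | exists y, F x y /\ t = f x y].

End Defs.

From HB Require Import structures.
From mathcomp Require Import all_boot all_order all_algebra.
From mathcomp Require Import boolp classical_sets reals constructive_ereal ereal.
From mathcomp Require Import ring lra.
Import Order.TTheory GRing.Theory Num.Theory.
Local Open Scope classical_set_scope.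
Local Open Scope ring_scope.

(* Put Phi(w) = sup { <w,x> - f(x,y) : y in F x }.  Then mu^*(w) = Phi(w), and
   every decomposition w = w1 + w2, 0 = v1 + v2 gives the weak duality bound
   Phi(w) <= f^*(w1,v1) + F^*(w2,v2), so the infimal convolution dominates Phi(w).
   The converse is the substance of the theorem: when Phi(w) = al is finite, a
   linear functional b separating the epigraph of f (shifted by <w,x> - al) from
   the graph of F yields w1 = w + b_x, w2 = - b_x, v = b_y with
   f^*(w1,v) + F^*(w2,-v) <= al, so the infimum is attained. *)

Section InnerProduct.
Context {R : realType}.
Implicit Types (N : nat).

Lemma dotvC {N} (u v : 'rV[R]_N) : dotv u v = dotv v u.
Proof. by rewrite /dotv; apply: eq_bigr => i _; rewrite mulrC. Qed.

Lemma dotvDr {N} (u v w : 'rV[R]_N) : dotv u (v + w) = dotv u v + dotv u w.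
Proof. by rewrite /dotv -big_split; apply: eq_bigr => i _; rewrite mxE mulrDr. Qed.

Lemma dotvDl {N} (u v w : 'rV[R]_N) : dotv (v + w) u = dotv v u + dotv w u.
Proof. by rewrite dotvC dotvDr !(dotvC u). Qed.

Lemma dotvZr {N} (u v : 'rV[R]_N) a : dotv u (a *: v) = a * dotv u v.
Proof. by rewrite /dotv mulr_sumr; apply: eq_bigr => i _; rewrite mxE mulrCA. Qed.

Lemma dotvZl {N} (u v : 'rV[R]_N) a : dotv (a *: v) u = a * dotv v u.
Proof. by rewrite dotvC dotvZr dotvC. Qed.

Lemma dotv0l {N} (u : 'rV[R]_N) : dotv 0 u = 0.
Proof. by rewrite /dotv big1 // => i _; rewrite mxE mul0r. Qed.

Lemma dotvNr {N} (u v : 'rV[R]_N) : dotv u (- v) = - dotv u v.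
Proof. by rewrite -scaleN1r dotvZr mulN1r. Qed.

Lemma dotvNl {N} (u v : 'rV[R]_N) : dotv (- u) v = - dotv u v.
Proof. by rewrite dotvC dotvNr dotvC. Qed.

Lemma dotvBr {N} (u v w : 'rV[R]_N) : dotv u (v - w) = dotv u v - dotv u w.
Proof. by rewrite dotvDr dotvNr. Qed.

Lemma dotv_row_mx {n p} (x1 x2 : 'rV[R]_n) (y1 y2 : 'rV[R]_p) :
  dotv (row_mx x1 y1) (row_mx x2 y2) = dotv x1 x2 + dotv y1 y2.
Proof.
rewrite /dotv big_split_ord /=; congr (_ + _); apply: eq_bigr => i _;
by rewrite ?row_mxEl ?row_mxEr.
Qed.

Lemma dotv_delta {N} (b : 'rV[R]_N) k : dotv b (delta_mx 0 k) = b 0 k.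
Proof.
rewrite /dotv (bigD1 k) //= big1 ?addr0; first by rewrite mxE !eqxx mulr1.
by move=> i /negbTE ik; rewrite mxE ik andbF mulr0.
Qed.

Lemma dist2E {N} (x y : 'rV[R]_N) : dist2 x y = dotv (x - y) (x - y).
Proof. by rewrite /dist2 /dotv; apply: eq_bigr => i _; rewrite !mxE expr2. Qed.

Lemma dist2_ge0 {N} (x y : 'rV[R]_N) : 0 <= dist2 x y.
Proof. by rewrite /dist2 sumr_ge0 // => i _; rewrite sqr_ge0. Qed.

Lemma dist2_sub {N} (x y : 'rV[R]_N) : dist2 x y = dist2 (x - y) 0.
Proof. by rewrite !dist2E subr0. Qed.

Lemma dist2Z {N} (x : 'rV[R]_N) t : dist2 (t *: x) 0 = t ^+ 2 * dist2 x 0.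
Proof. by rewrite !dist2E !subr0 dotvZl dotvZr mulrA expr2. Qed.

Lemma dist2D {N} (x y : 'rV[R]_N) :
  dist2 (x + y) 0 <= 2 * dist2 x 0 + 2 * dist2 y 0.
Proof.
rewrite /dist2 !mulr_sumr -big_split /=; apply: ler_sum => i _.
rewrite !mxE !subr0.
have := sqr_ge0 (x 0 i - y 0 i); lra.
Qed.

Lemma dist2_row_mx {n p} (x1 x2 : 'rV[R]_n) (y1 y2 : 'rV[R]_p) :
  dist2 (row_mx x1 y1) (row_mx x2 y2) = dist2 x1 x2 + dist2 y1 y2.
Proof. by rewrite !dist2E opp_row_mx add_row_mx dotv_row_mx. Qed.

Lemma coord_small {N} (x : 'rV[R]_N) j rho : 0 < rho -> dist2 x 0 < rho ^+ 2 ->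
  `|x 0 j| < rho.
Proof.
move=> r0 h.
have hj : (x 0 j) ^+ 2 <= dist2 x 0.
  rewrite /dist2 (bigD1 j) //= mxE subr0 lerDl sumr_ge0 // => i _.
  by rewrite sqr_ge0.
by rewrite -(ltr_sqr (normr_ge0 _) (ltW r0)) // real_normK ?num_real ?(le_lt_trans hj).
Qed.

Lemma mulmx_small {N k} (x : 'rV[R]_N) (P : 'M[R]_(N, k)) i rho :
  0 < rho -> dist2 x 0 < rho ^+ 2 ->
  `|(x *m P) 0 i| <= rho * \sum_(j < N) `|P j i|.
Proof.
move=> r0 h; rewrite mxE mulr_sumr.
apply: le_trans (ler_norm_sum _ _ _) _; apply: ler_sum => j _.
rewrite normrM ler_wpM2r //; exact: ltW (coord_small _ _ _ r0 h).
Qed.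

Lemma dotv_small {N} (d x : 'rV[R]_N) rho :
  0 < rho -> dist2 x 0 < rho ^+ 2 ->
  `|dotv d x| <= rho * \sum_(j < N) `|d 0 j|.
Proof.
move=> r0 h; rewrite /dotv mulr_sumr.
apply: le_trans (ler_norm_sum _ _ _) _; apply: ler_sum => j _.
rewrite normrM mulrC ler_wpM2r //; exact: ltW (coord_small _ _ _ r0 h).
Qed.

Lemma le_by_small_multiple (a c K : R) :
  0 <= K -> (forall rho, 0 < rho -> a <= c + rho * K) -> a <= c.
Proof.
move=> K0 H; apply/ler_addgt0Pr => e e0.
have rho0 : 0 < e / (K + 1) by rewrite divr_gt0 // ltr_wpDl.
apply: le_trans (H _ rho0) _; rewrite lerD2l.
rewrite mulrAC ler_pdivrMr ?ltr_wpDl // ler_wpM2l ?(ltW e0) //.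
by rewrite lerDl.
Qed.

Lemma eclosure_dotv_le {N} (C : set 'rV[R]_N) (d v : 'rV[R]_N) be :
  (forall u, C u -> dotv d u <= be) -> eclosure C v -> dotv d v <= be.
Proof.
move=> H vC; apply: (le_by_small_multiple _ _ (\sum_(j < N) `|d 0 j|)).
  exact: sumr_ge0.
move=> rho rho0; have [u [Cu hu]] := vC rho rho0.
rewrite -(subrK u v) dotvDr addrC; apply: lerD; first exact: H.
apply: le_trans (ler_norm _) _; apply: dotv_small => //.
by rewrite -dist2_sub.
Qed.

End InnerProduct.

Section RowSpaces.
Context {R : realType}.

Lemma finite_spanning_family {N} (X : set 'rV[R]_N) :
  exists k (M : 'M[R]_(k, N)), (forall i, X (row i M)) /\
     (forall x, X x -> (x <= M)%MS).
Proof.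
(* otherwise, adding a vector outside the current row space forever would
   produce families in X of rank larger than N *)
apply: contrapT => no_family.
have grow : forall r, exists k (M : 'M[R]_(k, N)),
    (forall i, X (row i M)) /\ (r <= \rank M)%N.
  elim=> [|r [k [M [XM Hr]]]]; first by exists 0%N, 0; split => // -[].
  have [x [Xx nx]] : exists x, X x /\ ~ (x <= M)%MS.
    apply: contrapT => all_in; apply: no_family; exists k, M; split => // x Xx.
    by apply: contrapT => nx; apply: all_in; exists x.
  exists (1 + k)%N, (col_mx x M); split.
    move=> i; rewrite -(splitK i); case: (split i) => j /=.
      by rewrite rowKu (ord1 j) (_ : row 0 x = x) //; apply/rowP => l; rewrite mxE.
    by rewrite rowKd.
  have sMM : (M <= col_mx x M)%MS by rewrite -addsmxE addsmxSr.
  have [le eq] := mxrank_leqif_sup sMM.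
  have : \rank M != \rank (col_mx x M).
    rewrite eq; apply/negP => sub; apply: nx.
    by apply: submx_trans sub; rewrite -addsmxE addsmxSl.
  by move=> ne; apply: leq_ltn_trans Hr _; rewrite ltn_neqAle ne le.
have [k [M [_ HM]]] := grow N.+1.
by have := rank_leq_col M; rewrite leqNgt HM.
Qed.

Lemma rowspace_closed {k N} (M : 'M[R]_(k, N)) (x : 'rV[R]_N) :
  (forall e : R, 0 < e -> exists v, (v <= M)%MS /\ dist2 x v < e ^+ 2) ->
  (x <= M)%MS.
Proof.
move=> H; rewrite submxE; apply/eqP/rowP => j; rewrite [RHS]mxE.
set K := cokermx M.
apply/eqP; rewrite -normr_le0.
apply: (le_by_small_multiple _ _ (\sum_(i < N) `|K i j|)); first exact: sumr_ge0.
move=> rho rho0; have [v [vM hv]] := H rho rho0.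
have vK : v *m K = 0 by apply/eqP; rewrite -submxE.
rewrite add0r -(subrK v x) mulmxDl vK addr0.
by apply: mulmx_small => //; rewrite -dist2_sub.
Qed.

Lemma submxB {m1 m2 N} (A B : 'M[R]_(m1, N)) (C : 'M[R]_(m2, N)) :
  (A <= C)%MS -> (B <= C)%MS -> (A - B <= C)%MS.
Proof. by move=> hA hB; apply: addmx_sub => //; rewrite -scaleN1r scalemx_sub. Qed.

End RowSpaces.

Section HahnBanach.
Context {R : realType}.

Definition convex_pairs {N} (S : 'rV[R]_N -> R -> Prop) :=
  forall u1 s1 u2 s2 l, S u1 s1 -> S u2 s2 -> 0 <= l -> l <= 1 ->
    S (l *: u1 + (1 - l) *: u2) (l * s1 + (1 - l) * s2).

Definition supported_below {N} (k : nat) (u : 'rV[R]_N) :=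
  forall j : 'I_N, (k <= j)%N -> u 0 j = 0.

Lemma quot_le (t1 t2 D1 D2 : R) : t1 < 0 -> 0 < t2 ->
  0 <= t2 * D1 - t1 * D2 -> D1 / t1 <= D2 / t2.
Proof.
move=> h1 h2 h.
have ng : t1 * t2 < 0 by rewrite nmulr_rlt0.
have e : t2 * D1 - t1 * D2 = (D1 / t1 - D2 / t2) * (t1 * t2).
  by field; rewrite (lt_eqF h1) (gt_eqF h2).
by move: h; rewrite e nmulr_lge0 // subr_le0.
Qed.

Section ExtendOneCoordinate.
Variables (N : nat) (S : 'rV[R]_N -> R -> Prop) (k : 'I_N) (b : 'rV[R]_N).
Hypothesis convS : convex_pairs S.
Hypothesis b_dom : forall u s, S u s -> supported_below k u -> dotv b u <= s.

Let e : 'rV[R]_N := delta_mx 0 k.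

(* What remains of s once b has paid for the coordinates of u below k. *)
Let slack (u : 'rV[R]_N) (s : R) := s - dotv b (u - u 0 k *: e).

Lemma slackE (u : 'rV[R]_N) (s : R) : slack u s = s - dotv b u + u 0 k * b 0 k.
Proof. by rewrite /slack dotvBr dotvZr dotv_delta; ring. Qed.

Lemma supported_succ (u : 'rV[R]_N) (j : 'I_N) :
  supported_below k.+1 u -> (k <= j)%N -> j != k -> u 0 j = 0.
Proof.
move=> su kj jk; apply: su; rewrite ltn_neqAle kj andbT.
by apply: contra jk => /eqP h; apply/eqP/val_inj; rewrite /= h.
Qed.

(* The k-th coefficient of the extension must lie between the slopes
   slack/u_k of the points with u_k < 0 and of those with u_k > 0; convexity
   of S and domination by b on the hyperplane u_k = 0 order these slopes. *)
Lemma slopes_ordered u1 s1 u2 s2 : S u1 s1 -> S u2 s2 ->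
  supported_below k.+1 u1 -> supported_below k.+1 u2 -> u1 0 k < 0 -> 0 < u2 0 k ->
  slack u1 s1 / u1 0 k <= slack u2 s2 / u2 0 k.
Proof.
move=> S1 S2 sp1 sp2 t1 t2; apply: quot_le => //.
have dpos : 0 < u2 0 k - u1 0 k by rewrite subr_gt0 (lt_trans t1 t2).
set lam := u2 0 k / (u2 0 k - u1 0 k).
have l0 : 0 <= lam by rewrite divr_ge0 // ltW.
have l1 : lam <= 1 by rewrite ler_pdivrMr // mul1r lerDl oppr_ge0 ltW.
have on_hyperplane : supported_below k (lam *: u1 + (1 - lam) *: u2).
  move=> j kj; case: (eqVneq j k) => [->|jk].
    by rewrite !mxE /lam; field; rewrite (gt_eqF dpos).
  by rewrite !mxE (supported_succ u1 j) // (supported_succ u2 j) // !mulr0 addr0.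
have := b_dom _ _ (convS _ _ _ _ _ S1 S2 l0 l1) on_hyperplane.
rewrite dotvDr !dotvZr !slackE => hb.
have -> : u2 0 k * (s1 - dotv b u1 + u1 0 k * b 0 k) -
    u1 0 k * (s2 - dotv b u2 + u2 0 k * b 0 k) =
    (u2 0 k - u1 0 k) * ((lam * s1 + (1 - lam) * s2) -
       (lam * dotv b u1 + (1 - lam) * dotv b u2)).
  by rewrite /lam; field; rewrite (gt_eqF dpos).
by apply: mulr_ge0; [exact: ltW | rewrite subr_ge0].
Qed.

Lemma extend_one_coordinate :
  (exists u s, [/\ S u s, supported_below k.+1 u & u 0 k < 0]) ->
  (exists u s, [/\ S u s, supported_below k.+1 u & 0 < u 0 k]) ->
  exists b', forall u s, S u s -> supported_below k.+1 u -> dotv b' u <= s.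
Proof.
move=> [u1 [s1 [S1 sp1 neg1]]] [u2 [s2 [S2 sp2 pos2]]].
pose slopes (sgn : bool) := [set x : R | exists u s, [/\ S u s, supported_below k.+1 u,
  (if sgn then 0 < u 0 k else u 0 k < 0) & x = slack u s / u 0 k]].
have ordered l a : slopes false l -> slopes true a -> l <= a.
  move=> [v1 [r1 [? ? ? ->]]] [v2 [r2 [? ? ? ->]]]; exact: slopes_ordered.
have hubL : has_ubound (slopes false).
  by exists (slack u2 s2 / u2 0 k) => l Ll; apply: ordered => //; exists u2, s2.
pose sig := sup (slopes false).
have sig_le a : slopes true a -> sig <= a.
  by move=> Aa; apply: ge_sup => [|l Ll]; [exists (slack u1 s1 / u1 0 k), u1, s1 | exact: ordered].
have le_sig l : slopes false l -> l <= sig by move=> Ll; exact: ub_le_sup.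
exists (b + (sig - b 0 k) *: e) => u s Sus su.
rewrite dotvDl dotvZl (dotvC e) dotv_delta.
have [neg|pos|zero] := ltgtP (u 0 k) 0.
- have := le_sig _ (ex_intro _ u (ex_intro _ s (And4 Sus su neg erefl))).
  rewrite ler_ndivrMr // slackE; lra.
- have := sig_le _ (ex_intro _ u (ex_intro _ s (And4 Sus su pos erefl))).
  rewrite ler_pdivlMr // slackE; lra.
- rewrite zero mulr0 addr0; apply: b_dom => // j kj.
  by case: (eqVneq j k) => [->//|jk]; exact: supported_succ.
Qed.

End ExtendOneCoordinate.

Lemma dominated_functional {N} (S : 'rV[R]_N -> R -> Prop) :
  convex_pairs S -> (forall s, S 0 s -> 0 <= s) ->
  (forall y, exists t, 0 < t /\ exists s, S (t *: y) s) ->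
  exists b, forall u s, S u s -> dotv b u <= s.
Proof.
move=> convS S0 absorbing.
suff H k : (k <= N)%N -> exists b, forall u s, S u s -> supported_below k u ->
    dotv b u <= s.
  have [b Hb] := H N (leqnn N); exists b => u s Sus; apply: Hb => // j.
  by rewrite leqNgt ltn_ord.
elim: k => [_|k IH kN].
  exists 0 => u s Sus su; rewrite dotv0l.
  have u0 : u = 0 by apply/rowP => j; rewrite mxE; apply: su.
  by move: Sus; rewrite u0; exact: S0.
have [b Hb] := IH (ltnW kN).
pose kk : 'I_N := Ordinal kN.
have off_axis (v : 'rV[R]_N) :
    (forall j, j != kk -> v 0 j = 0) -> supported_below kk.+1 v.
  by move=> hv j kj; apply: hv; apply: contraTneq kj => ->; rewrite ltnn.
have [t1 [t1_gt0 [s1 S1]]] := absorbing (- delta_mx 0 kk).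
have [t2 [t2_gt0 [s2 S2]]] := absorbing (delta_mx 0 kk).
apply: (@extend_one_coordinate N S kk b convS Hb).
  exists (t1 *: - delta_mx 0 kk), s1; split => //.
    by apply: off_axis => j /negbTE jk; rewrite !mxE jk andbF oppr0 mulr0.
  by rewrite !mxE !eqxx mulrN1 oppr_lt0.
exists (t2 *: delta_mx 0 kk), s2; split => //.
  by apply: off_axis => j /negbTE jk; rewrite !mxE jk andbF mulr0.
by rewrite !mxE !eqxx mulr1.
Qed.

End HahnBanach.

Section AffineHull.
Context {R : realType}.

Lemma sum_unlift_max {V : zmodType} {k} (F : option 'I_k -> V) :
  \sum_(i < k.+1) F (unlift ord_max i) = \sum_(j < k) F (Some j) + F None.
Proof.
rewrite big_ord_recr /= unlift_none; congr (_ + _); apply: eq_bigr => j _.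
have -> : widen_ord (leqnSn k) j = lift ord_max j.
  by apply: val_inj; rewrite /= /bump leqNgt ltn_ord.
by rewrite liftK.
Qed.

Lemma affhull_affine_comb {N} (O : set 'rV[R]_N) x q al :
  affhull O x -> O q -> affhull O (al *: x + (1 - al) *: q).
Proof.
move=> [k [pts [c [Op [sc ->]]]]] Oq.
pose pt (o : option 'I_k) := if o is Some j then pts j else q.
pose co (o : option 'I_k) := if o is Some j then al * c j else 1 - al.
exists k.+1, (fun i => pt (unlift ord_max i)), (fun i => co (unlift ord_max i)).
split; first by move=> i; case: unlift.
rewrite (sum_unlift_max co) (sum_unlift_max (fun o => co o *: pt o)) /=.
rewrite -mulr_sumr sc mulr1 addrC subrK; split => //.
by rewrite scaler_sumr; congr (_ + _); apply: eq_bigr => i _; rewrite scalerA.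
Qed.

Lemma affhull_span_at {N} (O : set 'rV[R]_N) z0 k (p : 'I_k -> 'rV[R]_N) (c : 'I_k -> R) :
  O z0 -> (forall i, O (p i)) -> affhull O (z0 + \sum_i c i *: (p i - z0)).
Proof.
move=> Oz0 Op.
pose pt (o : option 'I_k) := if o is Some j then p j else z0.
pose co (o : option 'I_k) := if o is Some j then c j else 1 - \sum_j c j.
exists k.+1, (fun i => pt (unlift ord_max i)), (fun i => co (unlift ord_max i)).
split; first by move=> i; case: unlift.
rewrite (sum_unlift_max co) (sum_unlift_max (fun o => co o *: pt o)) /=.
rewrite addrC subrK; split => //.
under eq_bigr do rewrite scalerBr.
by rewrite sumrB -scaler_suml scalerBl scale1r addrCA.
Qed.

Lemma convex_comb {N} (C : set 'rV[R]_N) k (pts : 'I_k -> 'rV[R]_N) (c : 'I_k -> R) :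
  cvx_set C -> (forall i, C (pts i)) -> (forall i, 0 <= c i) ->
  \sum_i c i = 1 -> C (\sum_i c i *: pts i).
Proof.
move=> cC; elim: k pts c => [|k IH] pts c Cp c0 sc.
  by move: sc; rewrite big_ord0 => /eqP; rewrite eq_sym oner_eq0.
rewrite big_ord_recr /=; move: sc; rewrite big_ord_recr /= => sc.
set t := c ord_max; set s := \sum_(i < k) c (widen_ord (leqnSn k) i).
have hs : s = 1 - t by rewrite -sc addrK.
have t1 : t <= 1 by rewrite -sc lerDr sumr_ge0.
have [s0|sn0] := eqVneq s 0.
  have -> : \sum_(i < k) c (widen_ord (leqnSn k) i) *: pts (widen_ord (leqnSn k) i) = 0.
    rewrite big1 // => i _.
    suff -> : c (widen_ord (leqnSn k) i) = 0 by rewrite scale0r.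
    apply/eqP; rewrite eq_le c0 andbT -s0 /s (bigD1 i) //= lerDl sumr_ge0 //.
  have -> : t = 1 by move: hs; rewrite s0 => /eqP; rewrite eq_sym subr_eq0 => /eqP.
  by rewrite add0r scale1r.
have sp : 0 < s by rewrite lt_def sn0 sumr_ge0.
have -> : \sum_(i < k) c (widen_ord (leqnSn k) i) *: pts (widen_ord (leqnSn k) i) =
   s *: \sum_(i < k) (c (widen_ord (leqnSn k) i) / s) *: pts (widen_ord (leqnSn k) i).
  rewrite scaler_sumr; apply: eq_bigr => i _; rewrite scalerA mulrC divfK //.
have Cavg : C (\sum_(i < k) (c (widen_ord (leqnSn k) i) / s) *: pts (widen_ord (leqnSn k) i)).
  apply: IH => [i|i|]; first exact: Cp.
    by rewrite divr_ge0 // ltW.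
  by rewrite -mulr_suml mulfV.
by have := cC _ _ t Cavg (Cp ord_max) (c0 _) t1; rewrite -hs.
Qed.

(* With c0 and the points c0 + M_i in a convex set C, the points
   c0 + sum_j (1/(k+1) + mu_j) M_j stay in C when all |mu_j| <= 1/(k+1)^2:
   they are convex combinations of c0 and the c0 + M_j. *)
Lemma simplex_comb {N k} (C : set 'rV[R]_N) c0 (M : 'M[R]_(k, N)) (mu : 'I_k -> R) :
  cvx_set C -> C c0 -> (forall i, C (row i M + c0)) ->
  (forall j, `|mu j| <= (k.+1%:R)^-1 ^+ 2) ->
  C (c0 + \sum_j ((k.+1%:R)^-1 + mu j) *: row j M).
Proof.
move=> cC Cc0 CM mub; set ka := (k.+1%:R)^-1.
have ka0 : 0 < ka by rewrite invr_gt0 ltr0n.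
have kka : k%:R * ka <= 1 by rewrite ler_pdivrMr ?ltr0n // mul1r ler_nat.
have ka2 : ka ^+ 2 <= ka.
  by rewrite expr2 ler_piMl ?(ltW ka0) // invf_le1 ?ltr0n // ler1n.
have sum_mu : \sum_j mu j <= ka.
  apply: le_trans (_ : \sum_(j < k) ka ^+ 2 <= _).
    by apply: ler_sum => j _; exact: le_trans (ler_norm _) (mub j).
  by rewrite sumr_const card_ord -mulr_natl expr2 mulrA ler_piMl // ltW.
have sum_co : \sum_j (ka + mu j) + (ka - \sum_j mu j) = 1.
  rewrite big_split /= sumr_const card_ord -mulr_natl.
  have -> : k%:R * ka + \sum_j mu j + (ka - \sum_j mu j) = k.+1%:R * ka.
    by rewrite -natr1; ring.
  by rewrite mulfV // pnatr_eq0.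
pose pts (o : option 'I_k) := if o is Some j then row j M + c0 else c0.
pose co (o : option 'I_k) := if o is Some j then ka + mu j else ka - \sum_j mu j.
have -> : c0 + \sum_j (ka + mu j) *: row j M =
    \sum_(i < k.+1) co (unlift ord_max i) *: pts (unlift ord_max i).
  rewrite (sum_unlift_max (fun o => co o *: pts o)) /=.
  under [X in _ = X + _]eq_bigr do rewrite scalerDr.
  by rewrite big_split /= -scaler_suml -addrA -scalerDl sum_co scale1r addrC.
apply: convex_comb => [//|i|i|]; first by case: unlift.
  case: unlift => [j|] /=; last by rewrite subr_ge0.
  by have := mub j; rewrite -/ka ler_norml => /andP [h _]; lra.
by rewrite (sum_unlift_max co).
Qed.

Lemma barycenter_ball {N k} (C : set 'rV[R]_N) c0 (M : 'M[R]_(k, N)) :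
  cvx_set C -> C c0 -> (forall i, C (row i M + c0)) ->
  exists b r, [/\ 0 < r, C b &
    forall x, (x - b <= M)%MS -> dist2 x b < r ^+ 2 -> C x].
Proof.
move=> cC Cc0 CM; set ka : R := (k.+1%:R)^-1.
have ka0 : 0 < ka by rewrite invr_gt0 ltr0n.
pose b := c0 + ka *: \sum_i row i M.
pose P := pinvmx M.
pose Kt := \sum_(j < k) \sum_(l < N) `|P l j|.
have Kt0 : 0 <= Kt by apply: sumr_ge0 => j _; apply: sumr_ge0.
pose r := ka ^+ 2 / (Kt + 1).
have r0 : 0 < r by rewrite divr_gt0 ?exprn_gt0 // ltr_wpDl.
have ball x : (x - b <= M)%MS -> dist2 x b < r ^+ 2 -> C x.
  move=> xM xr; pose mu := (x - b) *m P.
  have -> : x = c0 + \sum_j (ka + mu 0 j) *: row j M.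
    have -> : x = b + \sum_j mu 0 j *: row j M.
      by rewrite -mulmx_sum_row mulmxKpV // addrC subrK.
    under [in RHS]eq_bigr do rewrite scalerDl.
    by rewrite big_split /= -scaler_sumr addrA.
  apply: simplex_comb => // j.
  have h1 : dist2 (x - b) 0 < r ^+ 2 by rewrite -dist2_sub.
  apply: le_trans (mulmx_small (x - b) P j r r0 h1) _.
  rewrite /r mulrAC ler_pdivrMr ?ltr_wpDl // ler_wpM2l ?exprn_ge0 ?ltW //.
  have hj : \sum_(l < N) `|P l j| <= Kt.
    rewrite /Kt (bigD1 j) //= lerDl; apply: sumr_ge0 => i _; exact: sumr_ge0.
  by apply: le_lt_trans hj _; rewrite ltrDl ltr01.
exists b, r; split => //; apply: ball; first by rewrite subrr sub0mx.
by rewrite dist2_sub subrr /dist2 big1 ?exprn_gt0 // => i _; rewrite !mxE subr0 expr0n.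
Qed.

Lemma core_span {N} (C O : set 'rV[R]_N) c0 :
  C c0 -> O `<=` eclosure C ->
  exists k (M : 'M[R]_(k, N)), [/\ forall i, C (row i M + c0),
    forall c, C c -> (c - c0 <= M)%MS & forall x, affhull O x -> (x - c0 <= M)%MS].
Proof.
move=> Cc0 OC.
have [k [M [XM spM]]] := finite_spanning_family [set v | exists c, C c /\ v = c - c0].
have CM i : C (row i M + c0) by have [c [Cc ->]] := XM i; rewrite subrK.
have CsubM c : C c -> (c - c0 <= M)%MS by move=> Cc; apply: spM; exists c.
have clM o : eclosure C o -> (o - c0 <= M)%MS.
  move=> oC; apply: rowspace_closed => e e0.
  have [c [Cc hc]] := oC e e0; exists (c - c0); split; first exact: CsubM.
  by rewrite dist2_sub opprB addrA subrK -dist2_sub.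
exists k, M; split => // _ [m [pts [mu [Op [smu ->]]]]].
have -> : \sum_i mu i *: pts i - c0 = \sum_i mu i *: (pts i - c0).
  under [RHS]eq_bigr do rewrite scalerBr.
  by rewrite sumrB -scaler_suml smu scale1r.
by apply: summx_sub => i _; apply: scalemx_sub; apply: clM; exact: OC.
Qed.

Lemma stretch_in_ball {N} (a b : 'rV[R]_N) (d : R) : 0 < d ->
  exists eps, 0 < eps /\ forall x, dist2 x a < (d / 4) ^+ 2 ->
    dist2 ((1 + eps) *: x + (1 - (1 + eps)) *: b) a < d ^+ 2.
Proof.
move=> d0; pose D := dist2 a b.
have D0 : 0 <= D by exact: dist2_ge0.
have D1 : 0 < D + 1 by rewrite ltr_wpDl.
pose eps := Num.min 1 (d ^+ 2 / (4 * (D + 1))).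
have eps0 : 0 < eps by rewrite lt_min ltr01 divr_gt0 ?exprn_gt0 // mulr_gt0.
have eps1 : eps <= 1 by rewrite ge_min lexx.
have epsD : eps * D <= d ^+ 2 / 4.
  apply: le_trans (ler_wpM2r D0 (_ : eps <= d ^+ 2 / (4 * (D + 1)))) _.
    by rewrite ge_min lexx orbT.
  have -> : d ^+ 2 / (4 * (D + 1)) * D = d ^+ 2 / 4 * (D / (D + 1)).
    by field; rewrite (gt_eqF D1).
  rewrite ler_piMr ?divr_ge0 ?exprn_ge0 ?ltW //.
  by rewrite ltr_pdivrMr // mul1r ltrDl ltr01.
exists eps; split => // x xa; rewrite dist2_sub.
have -> : (1 + eps) *: x + (1 - (1 + eps)) *: b - a =
    (1 + eps) *: (x - a) + eps *: (a - b).
  by apply/rowP => j; rewrite !mxE; ring.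
apply: le_lt_trans (dist2D _ _) _; rewrite !dist2Z -!dist2_sub -/D.
have h1 : (1 + eps) ^+ 2 * dist2 x a <= 4 * dist2 x a.
  rewrite ler_wpM2r ?dist2_ge0 // (_ : 4 = 2 ^+ 2); last by rewrite expr2; lra.
  by rewrite ler_sqr ?nnegrE; lra.
have h2 : eps ^+ 2 * D <= eps * D by rewrite expr2 ler_wpM2r // ler_piMl // ltW.
have h3 : (d / 4) ^+ 2 = d ^+ 2 / 16 by field.
rewrite h3 in xa; lra.
Qed.

(* A relative interior point a of a nearly convex set O (C <= O <= cl C, C convex)
   has a relative ball contained in the convex core C itself: stretch x slightly
   away from the barycenter b of C to a point y of O, approximate y by c in C,
   and write x as a convex combination of c and a point of the ball around b. *)
Lemma relint_core_ball {N} {C O : set 'rV[R]_N} {a} {d : R} :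
  cvx_set C -> C `<=` O -> O `<=` eclosure C -> O a -> 0 < d ->
  (eball a d `&` affhull O) `<=` O ->
  exists r, 0 < r /\ (eball a r `&` affhull O) `<=` C.
Proof.
move=> cC CO OC Oa d0 Hd.
have [c0 [Cc0 _]] := OC a Oa 1 ltr01.
have [k [M [CM CsubM affM]]] := core_span _ _ _ Cc0 OC.
have [b [r [r0 Cb ballC]]] := barycenter_ball _ _ _ cC Cc0 CM.
have [eps [eps0 stretch]] := stretch_in_ball a b _ d0.
exists (d / 4); split; first by rewrite divr_gt0.
move=> x [xa xaff].
pose y := (1 + eps) *: x + (1 - (1 + eps)) *: b.
have yaff : affhull O y by apply: affhull_affine_comb => //; exact: CO.
have Oy : O y by apply: Hd; split; [exact: stretch | exact: yaff].
have [c [Cc hc]] := OC y Oy (eps * r) (mulr_gt0 eps0 r0).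
pose z := b + eps^-1 *: (y - c).
have Cz : C z.
  apply: ballC.
    rewrite /z addrAC subrr add0r scalemx_sub //.
    rewrite (_ : y - c = (y - c0) - (c - c0)); last by rewrite opprB addrA subrK.
    by apply: submxB; [exact: affM | exact: CsubM].
  rewrite dist2_sub /z addrAC subrr add0r dist2Z -dist2_sub.
  have -> : r ^+ 2 = eps^-1 ^+ 2 * (eps * r) ^+ 2 by field; rewrite (gt_eqF eps0).
  by rewrite ltr_pM2l // exprn_gt0 // invr_gt0.
pose t := eps / (1 + eps).
have e1 : 0 < 1 + eps by rewrite ltr_wpDl // ltW.
have -> : x = (1 - t) *: c + t *: z.
  apply/rowP => j; rewrite /z /y /t !mxE; field.
  by rewrite (gt_eqF eps0) (gt_eqF e1).
apply: cC => //; first by rewrite divr_ge0 // ltW.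
by rewrite ler_pdivrMr // mul1r lerDr ler01.
Qed.

Lemma small_scale (Q r : R) : 0 <= Q -> 0 < r ->
  exists t0, 0 < t0 /\ forall t, 0 < t -> t <= t0 -> t ^+ 2 * Q < r ^+ 2.
Proof.
move=> Q0 r0; exists (Num.min 1 (r ^+ 2 / (Q + 1))); split.
  by rewrite lt_min ltr01 divr_gt0 ?exprn_gt0 // ltr_wpDl.
move=> t t0; rewrite le_min => /andP [t1 t2].
have Q1 : 0 < Q + 1 by rewrite ltr_wpDl.
apply: (@le_lt_trans _ _ (t * Q)).
  by rewrite expr2 -mulrA ler_piMl // mulr_ge0 // ltW.
apply: (@le_lt_trans _ _ (r ^+ 2 / (Q + 1) * Q)); first by rewrite ler_wpM2r.
rewrite mulrAC ltr_pdivrMr // ltr_pM2l ?exprn_gt0 //.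
by rewrite ltrDl ltr01.
Qed.

Lemma relball_scaled {N k} {O P : set 'rV[R]_N} {z0} {r : R}
    (p : 'I_k -> 'rV[R]_N) (mu : 'I_k -> R) :
  0 < r -> O z0 -> (forall i, O (p i)) ->
  (forall z, dist2 z z0 < r ^+ 2 -> affhull O z -> P z) ->
  exists t0, 0 < t0 /\ forall t, 0 < t -> t <= t0 ->
    P (z0 + t *: \sum_i mu i *: (p i - z0)).
Proof.
move=> r0 Oz0 Op H.
have [t0 [t00 ht]] := small_scale _ _ (dist2_ge0 (\sum_i mu i *: (p i - z0)) 0) r0.
exists t0; split => // t t_gt0 tt0; apply: H.
  by rewrite dist2_sub addrAC subrr add0r dist2Z; exact: ht.
rewrite scaler_sumr; under eq_bigr do rewrite scalerA.
exact: affhull_span_at.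
Qed.

End AffineHull.

Section Separation.
Context {R : realType}.

Definition diff_rel {N} (CE : 'rV[R]_N -> R -> Prop) (CG : set 'rV[R]_N) u s :=
  exists z1 z2, [/\ CE z1 s, CG z2 & u = z1 - z2].

Lemma convex_diff_rel {N} (CE : 'rV[R]_N -> R -> Prop) (CG : set 'rV[R]_N) :
  convex_pairs CE -> cvx_set CG -> convex_pairs (diff_rel CE CG).
Proof.
move=> cE cG u1 s1 u2 s2 l [a1 [b1 [Ea1 Gb1 ->]]] [a2 [b2 [Ea2 Gb2 ->]]] l0 l1.
exists (l *: a1 + (1 - l) *: a2), (l *: b1 + (1 - l) *: b2); split.
- exact: cE.
- by have := cG b2 b1 l Gb2 Gb1 l0 l1; rewrite addrC.
- by rewrite !scalerBr addrACA opprD.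
Qed.

(* Each row of M is some p_i - q_i, and the projection
   splits as d1 - d2 with d1, d2 directions of the two affine hulls. *)
Lemma diff_rel_absorbing {N k} {CE : 'rV[R]_N -> R -> Prop} {CG DO GO : set 'rV[R]_N}
    {z0} {r1 r2 : R} {M : 'M[R]_(k, N)} :
  (forall z t, CE z t -> DO z) -> CG `<=` GO -> DO z0 -> GO z0 -> 0 < r1 -> 0 < r2 ->
  (forall z, dist2 z z0 < r1 ^+ 2 -> affhull DO z -> exists t, CE z t) ->
  (forall z, dist2 z z0 < r2 ^+ 2 -> affhull GO z -> CG z) ->
  (forall i, exists s, diff_rel CE CG (row i M) s) ->
  forall y, exists t, 0 < t /\ exists s, diff_rel CE CG ((t *: y) *m (pinvmx M *m M)) s.
Proof.
move=> ED GG Dz0 Gz0 r10 r20 ballE ballG rowsM y.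
have rows i : exists pq : 'rV[R]_N * 'rV[R]_N,
    [/\ exists s, CE pq.1 s, CG pq.2 & row i M = pq.1 - pq.2].
  by have [s [z1 [z2 [E1 G2 e]]]] := rowsM i; exists (z1, z2); split => //; exists s.
have [pq hpq] := choice rows.
pose mu := y *m pinvmx M.
pose d1 := \sum_i mu 0 i *: ((pq i).1 - z0).
pose d2 := \sum_i mu 0 i *: ((pq i).2 - z0).
have wd : y *m (pinvmx M *m M) = d1 - d2.
  rewrite mulmxA mulmx_sum_row /d1 /d2 -sumrB; apply: eq_bigr => i _.
  have [_ _ ->] := hpq i.
  by rewrite -scalerBr opprB addrA subrK.
have D_pq i : DO (pq i).1 by have [[s Es] _ _] := hpq i; exact: ED Es.
have G_pq i : GO (pq i).2 by have [_ G2 _] := hpq i; exact: GG.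
have [t1 [t10 ht1]] := relball_scaled (fun i => (pq i).1) (fun i => mu 0 i) r10 Dz0 D_pq ballE.
have [t2 [t20 ht2]] := relball_scaled (fun i => (pq i).2) (fun i => mu 0 i) r20 Gz0 G_pq ballG.
pose t := Num.min t1 t2.
have t0 : 0 < t by rewrite lt_min t10 t20.
have [s Es] : exists s, CE (z0 + t *: d1) s by apply: ht1 => //; rewrite ge_min lexx.
exists t; split => //; exists s; exists (z0 + t *: d1), (z0 + t *: d2); split => //.
  by apply: ht2 => //; rewrite ge_min lexx orbT.
by rewrite -scalemxAl wd scalerBr opprD addrACA subrr add0r.
Qed.

(* Apply the Hahn-Banach lemma to the difference relation, restricted to its span. *)
Lemma convex_cores_separated {N} {CE : 'rV[R]_N -> R -> Prop} {CG DO GO : set 'rV[R]_N}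
    {z0} {r1 r2 : R} :
  convex_pairs CE -> cvx_set CG ->
  (forall z t, CE z t -> DO z) -> CG `<=` GO -> DO z0 -> GO z0 -> 0 < r1 -> 0 < r2 ->
  (forall z, dist2 z z0 < r1 ^+ 2 -> affhull DO z -> exists t, CE z t) ->
  (forall z, dist2 z z0 < r2 ^+ 2 -> affhull GO z -> CG z) ->
  (forall z t, CE z t -> CG z -> 0 <= t) ->
  exists b, forall z1 t z2, CE z1 t -> CG z2 -> dotv b (z1 - z2) <= t.
Proof.
move=> cE cG ED GG Dz0 Gz0 r10 r20 ballE ballG nonneg.
have [k [M [XM spM]]] := finite_spanning_family [set u | exists s, diff_rel CE CG u s].
pose S' (y : 'rV[R]_N) s := diff_rel CE CG (y *m (pinvmx M *m M)) s.
have cS' : convex_pairs S'.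
  move=> u1 s1 u2 s2 l h1 h2 l0 l1; rewrite /S' mulmxDl -!scalemxAl.
  exact: convex_diff_rel.
have S'0 s : S' 0 s -> 0 <= s.
  rewrite /S' mul0mx => -[z1 [z2 [E1 G2 /eqP]]].
  by rewrite eq_sym subr_eq0 => /eqP eq12; apply: (nonneg z1) => //; rewrite eq12.
have [b Hb] := dominated_functional _ cS' S'0
  (diff_rel_absorbing ED GG Dz0 Gz0 r10 r20 ballE ballG XM).
exists b => z1 t z2 E1 G2; apply: Hb.
rewrite /S' mulmxA mulmxKpV; first by exists z1, z2.
by apply: spM; exists t, z1, z2.
Qed.

Lemma eclosure_sep {N M} {A : set 'rV[R]_N} {B : set 'rV[R]_M} {d e al} :
  (forall a b, A a -> B b -> dotv d a + dotv e b <= al) ->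
  forall a b, eclosure A a -> eclosure B b -> dotv d a + dotv e b <= al.
Proof.
move=> H a b aA bB.
have Ha a' : A a' -> dotv d a' + dotv e b <= al.
  move=> Aa'; rewrite addrC -lerBrDr.
  by apply: (eclosure_dotv_le B) bB => b' Bb'; rewrite lerBrDr addrC; exact: H.
by rewrite -lerBrDr; apply: (eclosure_dotv_le A) aA => a' Aa'; rewrite lerBrDr; exact: Ha.
Qed.

End Separation.

Section EpigraphPoints.
Context {R : realType}.

Definition epi_pt {N} (z : 'rV[R]_N) (t : R) : 'rV[R]_(N + 1) :=
  row_mx z (\row_(j < 1) t).

Lemma epi_pt_comb {N} (z1 z2 : 'rV[R]_N) t1 t2 l :
  l *: epi_pt z1 t1 + (1 - l) *: epi_pt z2 t2 =
  epi_pt (l *: z1 + (1 - l) *: z2) (l * t1 + (1 - l) * t2).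
Proof.
rewrite /epi_pt !scale_row_mx add_row_mx; congr row_mx.
by apply/rowP => j; rewrite !mxE.
Qed.

Lemma epi_pt_inj {N} {z1 z2 : 'rV[R]_N} {t1 t2 : R} :
  epi_pt z1 t1 = epi_pt z2 t2 -> z1 = z2 /\ t1 = t2.
Proof.
move=> /eq_row_mx [-> h]; split => //.
by have := congr1 (fun m : 'rV[R]_1 => m 0 0) h; rewrite /= !mxE.
Qed.

Lemma epi_ptK {N} (W : 'rV[R]_(N + 1)) : W = epi_pt (lsubmx W) (rsubmx W 0 0).
Proof.
rewrite /epi_pt -{1}(hsubmxK W); congr row_mx.
by apply/rowP => j; rewrite (ord1 j) mxE.
Qed.

Lemma dotv_epi_pt {N} (d z : 'rV[R]_N) (a t : R) :
  dotv (epi_pt d a) (epi_pt z t) = dotv d z + a * t.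
Proof. by rewrite dotv_row_mx /dotv big_ord1 !mxE. Qed.

Lemma dist2_epi_pt {N} (z1 z2 : 'rV[R]_N) (t1 t2 : R) :
  dist2 z1 z2 <= dist2 (epi_pt z1 t1) (epi_pt z2 t2).
Proof. by rewrite dist2_row_mx lerDl dist2_ge0. Qed.

Definition core_rel {N} (C : set 'rV[R]_(N + 1)) (z : 'rV[R]_N) (t : R) :=
  C (epi_pt z t).

Lemma convex_pairs_dom {N} {S : 'rV[R]_N -> R -> Prop} :
  convex_pairs S -> cvx_set [set z | exists t, S z t].
Proof.
move=> cS x y t [tx Sx] [ty Sy] t0 t1.
exists ((1 - t) * tx + (1 - (1 - t)) * ty).
have := cS _ _ _ _ (1 - t) Sx Sy; rewrite (_ : 1 - (1 - t) = t); last by ring.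
apply.
  by rewrite subr_ge0.
by rewrite lerBlDr lerDl.
Qed.

End EpigraphPoints.

Section EpigraphCore.
Context {R : realType}.
Context {n p : nat} {f : 'rV[R]_n -> 'rV[R]_p -> \bar R} {C : set 'rV[R]_(n + p + 1)}.
Hypothesis f_gtNy : forall x y, (-oo < f x y)%E.
Hypothesis convC : cvx_set C.
Hypothesis C_epi : C `<=` epi f.
Hypothesis epi_C : epi f `<=` eclosure C.

Lemma core_rel_convex : convex_pairs (core_rel C).
Proof.
move=> z1 t1 z2 t2 l h1 h2 l0 l1; rewrite /core_rel.
have := convC _ _ (1 - l) h1 h2.
rewrite (_ : 1 - (1 - l) = l); last by ring.
rewrite epi_pt_comb; apply.
  by rewrite subr_ge0.
by rewrite lerBlDr lerDl.
Qed.

Lemma core_rel_epi {z t} : core_rel C z t -> exists x y, z = row_mx x y /\ (f x y <= t%:E)%E.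
Proof.
move=> /C_epi [x [y [a [e fa]]]]; have [-> ta] := epi_pt_inj e.
by exists x, y; rewrite ta.
Qed.

Lemma core_rel_domf {z t} : core_rel C z t -> domf f z.
Proof.
move=> /core_rel_epi [x [y [-> ft]]]; exists x, y; split => //.
exact: le_lt_trans ft (ltry _).
Qed.

Lemma domf_in_core_closure : domf f `<=` eclosure [set z | exists t, core_rel C z t].
Proof.
move=> z [x [y [-> fy]]] e e0.
have [a fa] : exists a, f x y = a%:E.
  by move: fy (f_gtNy x y); case: (f x y) => // a _ _; exists a.
have /epi_C /(_ e e0) [W [CW dW]] : epi f (epi_pt (row_mx x y) a).
  by exists x, y, a; rewrite fa.
exists (lsubmx W); split; first by exists (rsubmx W 0 0); rewrite /core_rel -epi_ptK.
by apply: le_lt_trans dW; rewrite {2}(epi_ptK W); exact: dist2_epi_pt.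
Qed.

Lemma core_rel_relball {z0} : relint (domf f) z0 ->
  exists r, 0 < r /\
    forall z, dist2 z z0 < r ^+ 2 -> affhull (domf f) z -> exists t, core_rel C z t.
Proof.
move=> [Dz0 [d [d0 Hd]]].
have dom_sub : [set z | exists t, core_rel C z t] `<=` domf f.
  by move=> z [t]; exact: core_rel_domf.
have [r [r0 Hr]] := relint_core_ball (convex_pairs_dom core_rel_convex) dom_sub
  domf_in_core_closure Dz0 d0 Hd.
by exists r; split => // z hz ha; exact: Hr.
Qed.

End EpigraphCore.

Section EpigraphGraphSeparation.
Context {R : realType}.

Lemma epi_gph_separation {n p} (f : 'rV[R]_n -> 'rV[R]_p -> \bar R)
    (F : 'rV[R]_n -> set 'rV[R]_p) (w : 'rV[R]_n) (al : R) :
  proper_fun f -> nearly_convex_fun f -> nearly_convex_map F ->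
  relint (domf f) `&` relint (gph F) !=set0 ->
  (forall x y, F x y -> ((dotv w x)%:E - f x y <= al%:E)%E) ->
  exists b : 'rV[R]_(n + p), forall x1 y1 (t : R) x2 y2,
    (f x1 y1 <= t%:E)%E -> F x2 y2 ->
    dotv b (row_mx x1 y1 - row_mx x2 y2) + dotv w x1 - t <= al.
Proof.
move=> [_ f_gtNy] [CEp [cvE [CEsub Esub]]] [CGp [cvG [CGsub Gsub]]]
  [z0 [riD [Gz0 [d2 [d20 Hd2]]]]] Hal.
pose CE := core_rel CEp.
have [r1 [r10 ballE]] := core_rel_relball f_gtNy cvE CEsub Esub riD.
have [r2 [r20 ballG]] := relint_core_ball cvG CGsub Gsub Gz0 d20 Hd2.
pose c : 'rV[R]_(n + p) := row_mx w 0.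
have dc x y : dotv c (row_mx x y) = dotv w x by rewrite dotv_row_mx dotv0l addr0.
pose CE' z s := exists t, CE z t /\ s = t - dotv c z + al.
have cE' : convex_pairs CE'.
  move=> z1 s1 z2 s2 l [t1 [E1 ->]] [t2 [E2 ->]] l0 l1.
  exists (l * t1 + (1 - l) * t2); split; first exact: (core_rel_convex cvE _ _ _ _ _ E1 E2 l0 l1).
  by rewrite dotvDr !dotvZr; ring.
have nonneg z s : CE' z s -> CGp z -> 0 <= s.
  move=> [t [/(core_rel_epi CEsub) [x [y [-> ft]]] ->]] /CGsub [x' [y' [e Fxy]]].
  have [ex ey] := eq_row_mx e; subst x' y'.
  have : ((dotv w x)%:E - t%:E <= al%:E)%E by apply: le_trans (Hal _ _ Fxy); apply: leeB.
  by rewrite -EFinB lee_fin dc; lra.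
have ED' z s : CE' z s -> domf f z by move=> [t [h _]]; apply: (core_rel_domf CEsub); exact: h.
have ballE' z : dist2 z z0 < r1 ^+ 2 -> affhull (domf f) z -> exists s, CE' z s.
  by move=> hz ha; have [t h] := ballE z hz ha; exists (t - dotv c z + al), t.
have ballG' z : dist2 z z0 < r2 ^+ 2 -> affhull (gph F) z -> CGp z.
  by move=> hz ha; exact: ballG.
have [b Hb] := convex_cores_separated cE' cvG ED' CGsub riD.1 Gz0 r10 r20 ballE' ballG' nonneg.
have core_ineq W z2 : CEp W -> CGp z2 ->
    dotv (epi_pt (b + c) (-1)) W + dotv (- b) z2 <= al.
  move=> EW G2.
  have E' : CE' (lsubmx W) (rsubmx W 0 0 - dotv c (lsubmx W) + al).
    by exists (rsubmx W 0 0); split => //; rewrite /CE /core_rel -epi_ptK.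
  rewrite {1}(epi_ptK W) dotv_epi_pt.
  have := Hb _ _ z2 E' G2; rewrite dotvBr dotvDl dotvNl; lra.
exists b => x1 y1 t x2 y2 ft Fx2.
have epi1 : epi f (epi_pt (row_mx x1 y1) t) by exists x1, y1, t.
have gph2 : gph F (row_mx x2 y2) by exists x2, y2.
have := eclosure_sep core_ineq _ _ (Esub _ epi1) (Gsub _ gph2).
rewrite dotv_epi_pt dotvNl dotvDl dc dotvBr; lra.
Qed.

End EpigraphGraphSeparation.

Definition graph_value {R : realType} {n p} (f : 'rV[R]_n -> 'rV[R]_p -> \bar R)
    (F : 'rV[R]_n -> set 'rV[R]_p) (w : 'rV[R]_n) : \bar R :=
  ereal_sup [set t | exists x y, F x y /\ t = ((dotv w x)%:E - f x y)%E].

Section Duality.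
Context {R : realType}.
Context {n p : nat} {f : 'rV[R]_n -> 'rV[R]_p -> \bar R} {F : 'rV[R]_n -> set 'rV[R]_p}.

Lemma sub_inf_le (r : R) (S : set \bar R) (Q : \bar R) :
  (forall s, S s -> r%:E - s <= Q)%E -> (r%:E - ereal_inf S <= Q)%E.
Proof.
case: Q => [q| |] H; [|exact: leey|].
- have lb : ((r - q)%:E <= ereal_inf S)%E.
    apply/ereal_infP => s Ss; move: (H s Ss); case: s {Ss} => [s'| |] //=.
      by rewrite -EFinB !lee_fin => h; rewrite lerBlDr -lerBlDl.
    by move=> _; exact: leey.
  apply: le_trans (leeB (lexx r%:E) lb) _.
  by rewrite -EFinB lee_fin opprB addrC subrK.
- suff -> : ereal_inf S = +oo%E by [].
  apply/eqP; rewrite eq_le leey /=; apply/ereal_infP => s Ss.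
  by move: (H s Ss); case: s {Ss}.
Qed.

Lemma fconj_optval w : fconj (optval f F) w = graph_value f F w.
Proof.
apply/eqP; rewrite eq_le; apply/andP; split.
  apply: ge_ereal_sup => _ [x ->]; apply: sub_inf_le => _ [y [Fxy ->]].
  by apply: ereal_sup_ubound; exists x, y.
apply: ge_ereal_sup => _ [x [y [Fxy ->]]].
apply: le_trans (_ : ((dotv w x)%:E - optval f F x <= _)%E).
  by apply: leeB => //; apply: ereal_inf_lbound; exists y.
by apply: ereal_sup_ubound; exists x.
Qed.

(* Weak duality: Phi(w) <= f^*(w1,v1) + F^*(w2,v2) when w1 + w2 = w, v1 + v2 = 0,
   since <w,x> - f(x,y) = (<(w1,v1),(x,y)> - f(x,y)) + <(w2,v2),(x,y)>. *)
Lemma weak_duality w w1 w2 v1 v2 : w1 + w2 = w -> v1 + v2 = 0 ->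
  (graph_value f F w <= fconj2 f w1 v1 + mapconj F w2 v2)%E.
Proof.
move=> ew ev; apply: ge_ereal_sup => _ [x [y [Fxy ->]]].
have h1 : ((dotv w1 x + dotv v1 y)%:E - f x y <= fconj2 f w1 v1)%E.
  by apply: ereal_sup_ubound; exists x, y.
have h2 : ((dotv w2 x + dotv v2 y)%:E <= mapconj F w2 v2)%E.
  by apply: ereal_sup_ubound; exists x, y.
have -> : ((dotv w x)%:E - f x y =
    ((dotv w1 x + dotv v1 y)%:E - f x y) + (dotv w2 x + dotv v2 y)%:E)%E.
  rewrite addeAC -EFinD; congr (_ - _)%E; congr (_%:E).
  have -> : v2 = - v1 by rewrite -(subr0 v2) -ev opprD addrCA subrr addr0.
  by rewrite -ew dotvDl dotvNl; ring.
exact: leeD.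
Qed.

Hypothesis f_proper : proper_fun f.
Hypothesis ri_meet : relint (domf f) `&` relint (gph F) !=set0.

Lemma feasible_point : exists x0 y0 (t0 : R), F x0 y0 /\ f x0 y0 = t0%:E.
Proof.
case: ri_meet => z0 [[[x [y [-> fxy]]] _] [[x' [y' [ez' Fxy]]] _]].
have [ex ey] := eq_row_mx ez'; subst x' y'.
exists x, y; move: fxy (f_proper.2 x y).
by case: (f x y) => // t0 _ _; exists t0.
Qed.

Lemma graph_value_gtNy w : (-oo < graph_value f F w)%E.
Proof.
have [x0 [y0 [t0 [F0 ft0]]]] := feasible_point.
apply: lt_le_trans (_ : ((dotv w x0)%:E - f x0 y0 <= _)%E).
  by rewrite ft0 -EFinB ltNyr.
by apply: ereal_sup_ubound; exists x0, y0.
Qed.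

Hypothesis f_nc : nearly_convex_fun f.
Hypothesis F_nc : nearly_convex_map F.

(* Strong duality with attainment: when Phi(w) = al is finite, the separating
   functional b = (bx, by) of epi f and gph F gives w1 = w + bx, w2 = - bx,
   v = by with f^*(w1,v) + F^*(w2,-v) <= al; F^*(w2,-v) is finite since it lies
   between the values of <-b, .> at a feasible point and the separation bound. *)
Lemma dual_attained w (al : R) : graph_value f F w = al%:E ->
  exists w1 w2 v, w1 + w2 = w /\ (fconj2 f w1 v + mapconj F w2 (- v) <= al%:E)%E.
Proof.
move=> Phi_al.
have [b Hb] : exists b : 'rV[R]_(n + p), forall x1 y1 (t : R) x2 y2,
    (f x1 y1 <= t%:E)%E -> F x2 y2 ->
    dotv b (row_mx x1 y1 - row_mx x2 y2) + dotv w x1 - t <= al.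
  apply: epi_gph_separation => // x y Fxy.
  by rewrite -Phi_al; apply: ereal_sup_ubound; exists x, y.
set bx := lsubmx b; set bv := rsubmx b.
have eb : b = row_mx bx bv by rewrite hsubmxK.
exists (w + bx), (- bx), bv; split; first by rewrite addrK.
have dot_nb x y : dotv (- bx) x + dotv (- bv) y = - dotv b (row_mx x y).
  by rewrite eb dotv_row_mx !dotvNl opprD.
have sig_le x y (t : R) : (f x y <= t%:E)%E ->
    (mapconj F (- bx) (- bv) <= (al - (dotv b (row_mx x y) + dotv w x - t))%:E)%E.
  move=> ft; apply: ge_ereal_sup => _ [x2 [y2 [Fxy ->]]]; rewrite dot_nb lee_fin.
  by have := Hb x y t x2 y2 ft Fxy; rewrite dotvBr; lra.
have [x0 [y0 [t0 [F0 ft0]]]] := feasible_point.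
have sig_ge : ((- dotv b (row_mx x0 y0))%:E <= mapconj F (- bx) (- bv))%E.
  by apply: ereal_sup_ubound; exists x0, y0; rewrite dot_nb.
have [s es] : exists s : R, mapconj F (- bx) (- bv) = s%:E.
  have ft0' : (f x0 y0 <= t0%:E)%E by rewrite ft0.
  move: (sig_le _ _ _ ft0') sig_ge.
  by case: (mapconj F _ _) => // a _ _; exists a.
have fconj_le : (fconj2 f (w + bx) bv <= (al - s)%:E)%E.
  apply: ge_ereal_sup => _ [x [y ->]].
  case ef : (f x y) => [t| |]; last by have := f_proper.2 x y; rewrite ef.
    have ft : (f x y <= t%:E)%E by rewrite ef.
    have := sig_le x y t ft; rewrite es -EFinB !lee_fin eb dotv_row_mx dotvDl; lra.
  by rewrite /= leNye.
rewrite es; apply: le_trans (leeD fconj_le (lexx _)) _.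
by rewrite -EFinD subrK.
Qed.

End Duality.

Theorem theorem6p3 (R : realType) (n p : nat)
  (f : 'rV[R]_n -> 'rV[R]_p -> \bar R) (F : 'rV[R]_n -> set 'rV[R]_p) :
  proper_fun f -> nearly_convex_fun f -> nearly_convex_map F ->
  relint (domf f) `&` relint (gph F) !=set0 ->
  forall w : 'rV[R]_n,
    fconj (optval f F) w = infconv (fconj2 f) (mapconj F) w 0 /\
    (fconj (optval f F) w \is a fin_num ->
      exists (w1 w2 : 'rV[R]_n) (v : 'rV[R]_p), w1 + w2 = w /\
        fconj (optval f F) w = (fconj2 f w1 v + mapconj F w2 (- v))%E).
Proof.
move=> f_proper f_nc F_nc ri_meet w; rewrite fconj_optval.
have Phi_gtNy := graph_value_gtNy f_proper ri_meet w.
have attained := dual_attained f_proper ri_meet f_nc F_nc.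
have inf_ge : (graph_value f F w <= infconv (fconj2 f) (mapconj F) w 0)%E.
  by apply/ereal_infP => _ [w1 [w2 [v1 [v2 [e1 [e2 ->]]]]]]; exact: weak_duality.
split.
  apply/eqP; rewrite eq_le inf_ge /=.
  case Phi : (graph_value f F w) Phi_gtNy => [al| |] // _; last exact: leey.
  have [w1 [w2 [v [e1 hv]]]] := attained _ _ Phi.
  apply: le_trans hv; apply: ereal_inf_lbound.
  by exists w1, w2, v, (- v); rewrite subrr.
case Phi : (graph_value f F w) => [al| |] // _.
have [w1 [w2 [v [e1 hv]]]] := attained _ _ Phi.
exists w1, w2, v; split => //; apply/eqP; rewrite eq_le hv andbT -Phi.
exact: weak_duality e1 (subrr v).
Qed.
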